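(* There exist infinitely many graphs $G$ that are locally Ore and satisfy $\lambda(G) \ne \delta(G)$.
   Context: $\lambda(G)$ is the edge-connectivity and $\delta(G)$ the minimum degree of $G$. A graph $G$ is locally Ore if for every vertex $v \in V(G)$ and every pair $u,w$ of non-adjacent vertices in $N(v)$, $\deg_{\langle N(v)\rangle}(u) + \deg_{\langle N(v)\rangle}(w) \ge \deg_G(v)$, where $N(v)$ is the open neighbourhood of $v$ and $\langle N(v)\rangle$ the subgraph induced by it. *)

From mathcomp Require Import all_boot.
Set Implicit Arguments. Unset Strict Implicit. Unset Printing Implicit Defensive.

Definition simple_graph (T : finType) (e : rel T) : Prop :=
  symmetric e /\ irreflexive e.

Definition nbhd (T : finType) (e : rel T) (v : T) : {set T} := [set x | e v x].

Definition deg (T : finType) (e : rel T) (v : T) : nat := #|nbhd e v|.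

Definition deg_in_nbhd (T : finType) (e : rel T) (v u : T) : nat :=
  #|[set x in nbhd e v | e u x]|.

Definition min_deg (T : finType) (e : rel T) : nat :=
  \big[minn/#|T|]_(v : T) deg e v.

Definition connected_graph (T : finType) (e : rel T) : bool :=
  [forall x, forall y, connect e x y].

Definition edges (T : finType) (e : rel T) : {set {set T}} :=
  [set s : {set T} | [exists x, exists y, e x y && (s == [set x; y])]].

Definition del_edges (T : finType) (e : rel T) (F : {set {set T}}) : rel T :=
  fun x y => e x y && ([set x; y] \notin F).

Definition disconnecting (T : finType) (e : rel T) (F : {set {set T}}) : bool :=
  (F \subset edges e) && ~~ connected_graph (del_edges e F).

(* lambda(G), edge connectivity: minimum size of a disconnecting edge set
   (0 if there is none, i.e. for the one-vertex / empty graph). *)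
Definition edge_conn (T : finType) (e : rel T) : nat :=
  \big[minn/#|edges e|]_(F : {set {set T}} | disconnecting e F) #|F|.

Definition locally_ore (T : finType) (e : rel T) : Prop :=
  forall v u w : T, u \in nbhd e v -> w \in nbhd e v -> u != w -> ~~ e u w ->
    deg e v <= deg_in_nbhd e v u + deg_in_nbhd e v w.

(* Glue two copies of the complete graph K_m along a complete bipartite graph
   K_{k,k} between k "hub" vertices of each copy.  The k^2 bridge edges
   disconnect the graph, while every degree is at least m - 1, so the edge
   connectivity is smaller than the minimum degree as soon as k^2 < m - 1.
   For local Oreness, two non-adjacent neighbours of v lie in different copies;
   one of them is a hub of the other copy, which sees 2(k-1) hubs inside N(v),
   the other sees the m - 2 remaining vertices of its own copy, and
   (m - 2) + 2(k - 1) >= deg v = m - 1 + k exactly when k >= 3. *)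

From mathcomp Require Import all_boot zify.
Set Implicit Arguments. Unset Strict Implicit. Unset Printing Implicit Defensive.

Section GraphInvariants.
Variables (T : finType) (e : rel T).

Lemma min_deg_ge d : d <= #|T| -> (forall v, d <= deg e v) -> d <= min_deg e.
Proof.
move=> dT ddeg; apply: (big_ind (fun x => d <= x)) => // x y dx dy.
by rewrite leq_min dx dy.
Qed.

Lemma edge_conn_le (F : {set {set T}}) : disconnecting e F -> edge_conn e <= #|F|.
Proof.
rewrite /edge_conn -big_filter => discF.
have : F \in [seq F' <- index_enum {set {set T}} | disconnecting e F'].
  by rewrite mem_filter discF mem_index_enum.
elim: [seq _ <- _ | _] => // F' r IHr; rewrite big_cons inE => /predU1P[<-|rF].
  exact: geq_minl.
exact: leq_trans (geq_minr _ _) (IHr rF).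
Qed.

Lemma disconnecting_cut (F : {set {set T}}) (A : {pred T}) x y :
    F \subset edges e -> x \in A -> y \notin A ->
    (forall u w, e u w -> (u \in A) != (w \in A) -> [set u; w] \in F) ->
  disconnecting e F.
Proof.
move=> Fe xA yA cutF; rewrite /disconnecting Fe; apply/forallP => /(_ x).
move=> /forallP /(_ y); apply/negP; move: yA; apply: contra => xy.
suff closedA : closed (del_edges e F) A by rewrite -(closed_connect closedA xy).
move=> u w /andP[euw uwF]; apply/eqP; apply: contraNT uwF; exact: cutF.
Qed.

End GraphInvariants.

Section BridgedCliques.
Variables m k : nat.
Hypotheses (k_gt0 : 0 < k) (k_le_m : k <= m).

Definition bridged_cliques : rel (bool * 'I_m) := fun x y =>
  if x.1 == y.1 then x.2 != y.2 else (x.2 < k) && (y.2 < k).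

Local Notation E := bridged_cliques.

Let i0 : 'I_m := Ordinal (leq_trans k_gt0 k_le_m).

Definition hubs : {set 'I_m} := [set j : 'I_m | j < k].

Definition bridges : {set {set bool * 'I_m}} :=
  (fun p => [set p.1; p.2]) @: setX (pair false @: hubs) (pair true @: hubs).

Lemma bridged_cliques_sym : symmetric E.
Proof.
move=> [s i] [t j]; rewrite /E /= (eq_sym t) (eq_sym j).
by case: (s == t); rewrite // andbC.
Qed.

Lemma bridged_cliques_irr : irreflexive E.
Proof. by move=> [s i]; rewrite /E /= !eqxx. Qed.

Lemma bridged_cliques_cross s t i j : s != t -> E (s, i) (t, j) = (i < k) && (j < k).
Proof. by rewrite /E /= => /negbTE->. Qed.

Lemma pair_inj (s : bool) : injective (pair s : 'I_m -> bool * 'I_m).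
Proof. by move=> i j []. Qed.

Lemma card_hubs : #|hubs| = k.
Proof.
have -> : hubs = widen_ord k_le_m @: [set: 'I_k].
  apply/setP => j; rewrite inE; apply/idP/imsetP => [jk|[j' _ ->]].
    by exists (Ordinal jk) => //; apply: val_inj.
  by rewrite /= ltn_ord.
rewrite card_imset ?cardsT ?card_ord // => i j /(congr1 val) /= ij.
exact: val_inj.
Qed.

Lemma bridged_cliques_connected : connected_graph E.
Proof.
have to_i0 x : connect E x (false, i0).
  case: x => s i; apply: (@connect_trans _ _ (s, i0)).
    have [->|ii0] := eqVneq i i0; first exact: connect0.
    by apply: connect1; rewrite /E /= eqxx.
  by case: s; [apply: connect1; rewrite /E /= k_gt0 | exact: connect0].
apply/forallP => x; apply/forallP => y; apply: connect_trans (to_i0 x) _.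
by rewrite (sym_connect_sym bridged_cliques_sym) to_i0.
Qed.

Lemma bridged_cliques_deg_ge v : m.-1 <= deg E v.
Proof.
case: v => s i.
have <- : #|pair s @: [set~ i]| = m.-1.
  by rewrite card_imset ?cardsC1 ?card_ord //; apply: pair_inj.
apply/subset_leq_card/subsetP => x /imsetP[j]; rewrite in_setC1 => ji ->.
by rewrite inE /E /= eqxx eq_sym.
Qed.

Lemma card_bridges : #|bridges| <= k * k.
Proof.
apply: leq_trans (leq_imset_card _ _) _.
by rewrite cardsX !card_imset ?card_hubs //; apply: pair_inj.
Qed.

Lemma bridge_endpoints (u w : bool * 'I_m) :
  u.1 != w.1 -> E u w -> u.2 \in hubs /\ w.2 \in hubs.
Proof.
case: u w => [s i] [t j] /= st; rewrite bridged_cliques_cross // !inE.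
by case/andP.
Qed.

Lemma bridges_disconnecting : disconnecting E bridges.
Proof.
have cut_endpoint : (false, i0) \in [pred x : bool * 'I_m | ~~ x.1] by [].
apply: (disconnecting_cut _ cut_endpoint (y := (true, i0))) => //.
  apply/subsetP => z /imsetP[[x y]]; rewrite inE /= => /andP[hx hy] ->.
  case/imsetP: hx => i hi ->; case/imsetP: hy => j hj ->.
  rewrite inE; apply/existsP; exists (false, i); apply/existsP; exists (true, j).
  by rewrite eqxx andbT bridged_cliques_cross //; move: hi hj; rewrite !inE => -> ->.
move=> [s i] [t j] Eij; rewrite !inE /= => st.
have [hi hj] : i \in hubs /\ j \in hubs.
  by apply: (bridge_endpoints _ Eij); move: st {Eij}; case: s; case: t.
case: s t st {Eij} => [] [] // _; apply/imsetP.
  by exists ((false, j), (true, i)); rewrite ?inE /= ?imset_f // setUC.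
by exists ((false, i), (true, j)); rewrite ?inE /= ?imset_f.
Qed.

Lemma bridged_cliques_nonadj u w : u != w -> ~~ E u w -> u.1 != w.1.
Proof.
case: u w => [s i] [t j] uw; apply: contraR => /negPn /eqP /= st; subst t.
by rewrite /E /= eqxx; apply: contraNneq uw => ->.
Qed.

Lemma card_pair_setD1 (s : bool) (A : {set 'I_m}) j :
  j \in A -> #|pair s @: (A :\ j)| = #|A|.-1.
Proof.
by move=> jA; rewrite card_imset ?[in RHS](cardsD1 j A) ?jA //; apply: pair_inj.
Qed.

Lemma bridged_cliques_ore_cross (s t : bool) (i a b : 'I_m) : 2 < k ->
    s != t -> i < k -> b < k -> a != i -> k <= a ->
  deg E (s, i) <= deg_in_nbhd E (s, i) (s, a) + deg_in_nbhd E (s, i) (t, b).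
Proof.
move=> k_ge3 st ik bk ai ka; have ts : t != s by rewrite eq_sym.
have deg_le : deg E (s, i) <= m.-1 + k.
  have nbhd_sub : nbhd E (s, i) \subset pair s @: [set~ i] :|: pair t @: hubs.
    apply/subsetP => -[r j]; rewrite !inE /E /=.
    have [->|rs] := eqVneq r s; first by move=> ji; rewrite imset_f ?inE // eq_sym.
    move=> /andP[_ jk]; have -> : r = t by move: rs ts; case: (r) (s) (t) => [] [] [].
    by rewrite orbC imset_f ?inE.
  apply: leq_trans (subset_leq_card nbhd_sub) _; apply: leq_trans (leq_card_setU _ _) _.
  by rewrite !card_imset ?cardsC1 ?card_ord ?card_hubs //; apply: pair_inj.
have a_side : m.-1.-1 <= deg_in_nbhd E (s, i) (s, a).
  have <- : #|[set~ i]| = m.-1 by rewrite cardsC1 card_ord.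
  rewrite -(@card_pair_setD1 s _ a) ?inE //.
  apply/subset_leq_card/subsetP => x /imsetP[j]; rewrite !inE => /andP[ja ji] ->.
  by rewrite /E /= eqxx eq_sym ji eq_sym ja.
have b_side : k.-1 + k.-1 <= deg_in_nbhd E (s, i) (t, b).
  have disj : [disjoint pair s @: (hubs :\ i) & pair t @: (hubs :\ b)].
    rewrite disjoints_subset; apply/subsetP => _ /imsetP[j _ ->]; rewrite inE.
    by apply/imsetP => -[j' _ [/eqP]]; rewrite (negbTE st).
  have <- : #|pair s @: (hubs :\ i) :|: pair t @: (hubs :\ b)| = k.-1 + k.-1.
    move: disj; rewrite -(leq_card_setU _ _).2 => /eqP->.
    by rewrite !card_pair_setD1 ?card_hubs ?inE.
  apply/subset_leq_card/subsetP => x.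
  rewrite !inE => /orP[] /imsetP[j]; rewrite !inE => /andP[jc jk] ->.
    by rewrite /E /= eqxx eq_sym jc (negbTE ts) bk jk.
  by rewrite /E /= eqxx (negbTE st) ik jk eq_sym jc.
rewrite /deg_in_nbhd in a_side b_side *; lia.
Qed.

Lemma bridged_cliques_locally_ore : 2 < k -> locally_ore E.
Proof.
move=> k_ge3; have ore_cross s t (i a b : 'I_m) : s != t ->
    E (s, i) (s, a) -> E (s, i) (t, b) -> ~~ E (s, a) (t, b) ->
  deg E (s, i) <= deg_in_nbhd E (s, i) (s, a) + deg_in_nbhd E (s, i) (t, b).
  move=> st; rewrite /E /= eqxx (negbTE st) => ai /andP[ik bk].
  rewrite bk andbT -leqNgt => ka.
  by apply: bridged_cliques_ore_cross; rewrite // eq_sym.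
move=> [s i] [r a] [t b]; rewrite !inE => vu vw uw nuw.
have rt := bridged_cliques_nonadj uw nuw; move: rt vu vw nuw => /= rt.
have [rs|rs] := eqVneq r s; first by subst r; exact: ore_cross.
have ts : t = s by move: rt rs; case: (r) (s) (t) => [] [] [].
subst t; rewrite addnC => vu vw; rewrite bridged_cliques_sym => nwu.
by apply: ore_cross; rewrite // eq_sym.
Qed.

Lemma bridged_cliques_edge_conn_lt : k * k < m.-1 -> edge_conn E < min_deg E.
Proof.
move=> kk_lt; apply: leq_ltn_trans (edge_conn_le bridges_disconnecting) _.
have delta_ge : m.-1 <= min_deg E.
  apply: min_deg_ge => [|v]; last exact: bridged_cliques_deg_ge.
  by rewrite card_prod card_bool card_ord; lia.
exact: leq_trans (leq_ltn_trans card_bridges kk_lt) delta_ge.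
Qed.

End BridgedCliques.

Arguments bridged_cliques : clear implicits.

Theorem mainTheorem11 :
  forall N : nat, exists (T : finType) (e : rel T),
    [/\ N < #|T|, simple_graph e, connected_graph e, locally_ore e
      & edge_conn e != min_deg e].
Proof.
move=> N; have k_le_m : 3 <= N + 11 by rewrite addnC.
exists (bool * 'I_(N + 11))%type, (bridged_cliques (N + 11) 3); split.
- by rewrite card_prod card_bool card_ord; lia.
- by split; [exact: bridged_cliques_sym | exact: bridged_cliques_irr].
- exact: bridged_cliques_connected.
- exact: bridged_cliques_locally_ore.
- rewrite neq_ltn bridged_cliques_edge_conn_lt //; lia.
Qed.
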